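(* Let $\Phi:\{0,1\}^\omega\to\{0,1\}^\omega$ be a computable function and let $b$ be a $\Phi$-martingale. Suppose that for every $\sigma\in\{0,1\}^{<\omega}$ the limit $$b'(\sigma)=\lim_{n\to\infty}\sum_{\tau\in\{0,1\}^n} b(\tau)\,\frac{\mu([\sigma]\cap\Phi^{-1}([\tau]))}{\mu([\sigma])}$$ exists. Then $b'$ is a martingale, i.e. $b'(\sigma0)+b'(\sigma1)=2b'(\sigma)$ for all $\sigma$. Furthermore, if $b$ satisfies the saving property, then $\Phi^{-1}(\mathrm{Succ}(b))\subseteq \mathrm{Succ}(b')$.
   Context: $\mu$ is the uniform (fair-coin) measure on $\{0,1\}^\omega$ and $[\tau]$ is the set of sequences extending $\tau$. For a computable (total) $\Phi:\{0,1\}^\omega\to\{0,1\}^\omega$, a $\Phi$-martingale is a function $b:\{0,1\}^{<\omega}\to\mathbb{R}_{\ge0}$ with $b(\tau)\mu(\Phi^{-1}[\tau])=b(\tau0)\mu(\Phi^{-1}[\tau0])+b(\tau1)\mu(\Phi^{-1}[\tau1])$ for all $\tau$. $\mathrm{Succ}(b)=\{Y:\limsup_n b(Y\upharpoonright n)=\infty\}$ (for a function on strings in general). $b$ has the saving property if for every $k\in\omega$ and every $Y\in\mathrm{Succ}(b)$ there is a finite proper prefix $\tau$ of $Y$ such that $b(\rho)\ge k$ for every string $\rho$ extending $\tau$. *)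

From Stdlib Require Import Reals Lra List Classical ClassicalEpsilon.
Import ListNotations.
Open Scope R_scope.

Definition cantor := nat -> bool.
Definition bstring := list bool.

Definition prefix_of (s : bstring) (X : cantor) : Prop :=
  forall i, (i < length s)%nat -> nth i s false = X i.

Definition cyl (s : bstring) : cantor -> Prop := fun X => prefix_of s X.

Definition sprefix (s t : bstring) : Prop := exists u, t = s ++ u.

Definition restr (X : cantor) (n : nat) : bstring := map X (seq 0 n).

Definition preimage (Phi : cantor -> cantor) (A : cantor -> Prop) : cantor -> Prop :=
  fun X => A (Phi X).

Definition inter (A B : cantor -> Prop) : cantor -> Prop := fun X => A X /\ B X.

Fixpoint strings (n : nat) : list bstring :=
  match n with
  | O => [ [] ]
  | S m => flat_map (fun s => [s ++ [false]; s ++ [true]]) (strings m)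
  end.

Definition sumR {A} (l : list A) (F : A -> R) : R :=
  fold_right (fun a acc => F a + acc) 0 l.

(** Supremum of a set of reals (0 if it is empty or unbounded above). *)
Definition Rsup (E : R -> Prop) : R :=
  match excluded_middle_informative (bound E /\ exists x, E x) with
  | left H => proj1_sig (completeness E (proj1 H) (proj2 H))
  | right _ => 0
  end.

Fixpoint psum (f : nat -> bstring) (n : nat) : R :=
  match n with
  | O => 0
  | S m => psum f m + (/ 2) ^ (length (f m))
  end.

(** Uniform (fair-coin) measure: Lebesgue outer measure on Cantor space,
    mu(A) = inf { sum_i 2^{-|f i|} : A subset of union_i [f i] }. *)
Definition covers (f : nat -> bstring) (A : cantor -> Prop) : Prop :=
  forall X, A X -> exists i, prefix_of (f i) X.

Definition mu (A : cantor -> Prop) : R :=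
  - Rsup (fun r => exists f : nat -> bstring,
             covers f A /\
             bound (fun s => exists n, s = psum f n) /\
             r = - Rsup (fun s => exists n, s = psum f n)).

(** Phi is a total functional given by a Turing-functional-style string map
    phi : every phi(X|m) is a prefix of Phi(X), and these approximations
    have unbounded length (totality). *)
Definition represents (phi : bstring -> bstring) (Phi : cantor -> cantor) : Prop :=
  (forall X m, prefix_of (phi (restr X m)) (Phi X)) /\
  (forall X n, exists m, (n <= length (phi (restr X m)))%nat).

Definition Phi_martingale (Phi : cantor -> cantor) (b : bstring -> R) : Prop :=
  (forall t, 0 <= b t) /\
  forall t,
    b t * mu (preimage Phi (cyl t)) =
    b (t ++ [false]) * mu (preimage Phi (cyl (t ++ [false]))) +
    b (t ++ [true]) * mu (preimage Phi (cyl (t ++ [true]))).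

(** Succ(b) = { Y : limsup_n b(Y|n) = infinity }, i.e. b(Y|n) is unbounded. *)
Definition Succ (b : bstring -> R) (Y : cantor) : Prop :=
  forall M : R, exists n, M < b (restr Y n).

Definition saving (b : bstring -> R) : Prop :=
  forall (k : nat) (Y : cantor), Succ b Y ->
    exists m : nat, forall rho, sprefix (restr Y m) rho -> INR k <= b rho.

Definition approx (Phi : cantor -> cantor) (b : bstring -> R) (s : bstring) (n : nat) : R :=
  sumR (strings n)
    (fun t => b t * (mu (inter (cyl s) (preimage Phi (cyl t))) / mu (cyl s))).

From Stdlib Require Import Reals Lra Lia List Classical ClassicalEpsilon FunctionalExtensionality.
Import ListNotations.
Open Scope R_scope.

(* For the outer measure mu one shows, using the
   compactness of Cantor space, that mu([s]) = 2^-|s| and that mu([s] ∩ A) is the sum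
   of mu([s0] ∩ A) and mu([s1] ∩ A); hence approx(s0) + approx(s1) = 2 approx(s) term
   by term, and the identity passes to the limit b'.
   For the second part, given k the saving property yields m with b >= k on all
   extensions of Phi(X)|m.  By totality some X|m' already forces Phi(Y)|m = Phi(X)|m for
   every Y in [X|m'], so for n >= m every t of length n reached from [X|m'] satisfies
   b(t) >= k.  Since the sets [X|m'] ∩ Phi^-1[t] cover [X|m'], approx(X|m', n) >= k, and
   so b'(X|m') >= k. *)

Lemma half_pow_pos n : 0 < (/2) ^ n.
Proof. apply pow_lt; lra. Qed.

Lemma half_pow_small eps : 0 < eps -> exists K, (/2) ^ K < eps.
Proof.
  intros Heps.
  destruct (pow_lt_1_zero (/2) ltac:(rewrite Rabs_pos_eq; lra) eps Heps) as [K HK].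
  exists K. specialize (HK K (le_n K)).
  rewrite Rabs_pos_eq in HK; [exact HK | left; apply half_pow_pos].
Qed.

Lemma Rsup_lub E : bound E -> (exists x, E x) -> is_lub E (Rsup E).
Proof.
  intros Hb Hne. unfold Rsup.
  destruct (excluded_middle_informative _) as [H | H].
  - exact (proj2_sig (completeness E (proj1 H) (proj2 H))).
  - exfalso. exact (H (conj Hb Hne)).
Qed.

Lemma Un_cv_ge_eventually u l a N :
  Un_cv u l -> (forall n, (N <= n)%nat -> a <= u n) -> a <= l.
Proof.
  intros Hu Ha. apply Rnot_lt_le. intros Hl.
  destruct (Hu (a - l) ltac:(lra)) as [M HM].
  specialize (HM (Nat.max N M) ltac:(lia)). specialize (Ha (Nat.max N M) ltac:(lia)).
  unfold R_dist in HM. rewrite Rabs_pos_eq in HM by lra. lra.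
Qed.

Section FiniteSums.
Context {T : Type}.

Lemma sumR_app (l1 l2 : list T) F : sumR (l1 ++ l2) F = sumR l1 F + sumR l2 F.
Proof. induction l1; simpl; [lra | rewrite IHl1; lra]. Qed.

Lemma sumR_add (l : list T) F G : sumR l (fun t => F t + G t) = sumR l F + sumR l G.
Proof. induction l; simpl; [lra | rewrite IHl; lra]. Qed.

Lemma sumR_scal (l : list T) k F : sumR l (fun t => k * F t) = k * sumR l F.
Proof. induction l; simpl; [lra | rewrite IHl; lra]. Qed.

Lemma sumR_le (l : list T) F G :
  (forall t, In t l -> F t <= G t) -> sumR l F <= sumR l G.
Proof.
  induction l as [|a l IH]; simpl; intros H; [lra|].
  pose proof (H a (or_introl eq_refl)). pose proof (IH (fun t Ht => H t (or_intror Ht))). lra.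
Qed.

Lemma sumR_nonneg (l : list T) F : (forall t, In t l -> 0 <= F t) -> 0 <= sumR l F.
Proof.
  intros H. replace 0 with (sumR l (fun _ => 0)) at 1.
  - now apply sumR_le.
  - induction l; simpl; [reflexivity | rewrite IHl; [lra | intros; apply H; now right]].
Qed.

Lemma sumR_ge_term (l : list T) F a :
  (forall t, In t l -> 0 <= F t) -> In a l -> F a <= sumR l F.
Proof.
  induction l as [|c l IH]; simpl; intros Hpos Ha; [contradiction|].
  destruct Ha as [<- | Ha].
  - pose proof (sumR_nonneg l F (fun t Ht => Hpos t (or_intror Ht))). lra.
  - pose proof (Hpos c (or_introl eq_refl)). pose proof (IH (fun t Ht => Hpos t (or_intror Ht)) Ha).
    lra.
Qed.

End FiniteSums.

Lemma sumR_filter_disjoint {T} (p q : T -> bool) (l : list T) F :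
  (forall t, In t l -> 0 <= F t) -> (forall t, p t = true -> q t = false) ->
  sumR (filter p l) F + sumR (filter q l) F <= sumR l F.
Proof.
  intros Hpos Hpq. induction l as [|a l IH]; simpl; [lra|].
  pose proof (Hpos a (or_introl eq_refl)).
  specialize (IH (fun t Ht => Hpos t (or_intror Ht))).
  destruct (p a) eqn:Ep; [rewrite (Hpq a Ep) | destruct (q a)]; simpl; lra.
Qed.

Lemma sprefix_nth u v i d : sprefix u v -> (i < length u)%nat -> nth i u d = nth i v d.
Proof. intros [z ->] Hi. now rewrite app_nth1. Qed.

Lemma sprefix_length u v : sprefix u v -> (length u <= length v)%nat.
Proof. intros [z ->]. rewrite length_app. lia. Qed.

Lemma sprefix_trans u v z : sprefix u v -> sprefix v z -> sprefix u z.
Proof. intros [a ->] [c ->]. exists (a ++ c). now rewrite app_assoc. Qed.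

Lemma prefix_of_sprefix u v X :
  prefix_of u X -> prefix_of v X -> (length u <= length v)%nat -> sprefix u v.
Proof.
  intros Hu Hv Hl. exists (skipn (length u) v).
  rewrite <- (firstn_skipn (length u) v) at 1. f_equal.
  apply nth_ext with (d := false) (d' := false); rewrite length_firstn; [lia|].
  intros i Hi. rewrite nth_firstn.
  destruct (Nat.ltb_spec i (length u)); [|lia].
  rewrite Hu, Hv by lia. reflexivity.
Qed.

Lemma prefix_of_rcons s c X : prefix_of (s ++ [c]) X <-> prefix_of s X /\ X (length s) = c.
Proof.
  split.
  - intros H. split.
    + intros i Hi. rewrite <- H by (rewrite length_app; simpl; lia). now rewrite app_nth1.
    + rewrite <- H by (rewrite length_app; simpl; lia).
      now rewrite app_nth2, Nat.sub_diag by lia.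
  - intros [H1 H2] i Hi. rewrite length_app in Hi. simpl in Hi.
    destruct (Nat.ltb_spec i (length s)).
    + rewrite app_nth1; auto.
    + replace i with (length s) by lia. now rewrite app_nth2, Nat.sub_diag by lia.
Qed.

Lemma prefix_of_rcons_cases s X :
  prefix_of s X -> prefix_of (s ++ [false]) X \/ prefix_of (s ++ [true]) X.
Proof.
  intros H. destruct (X (length s)) eqn:E; [right | left]; apply prefix_of_rcons; auto.
Qed.

Lemma sprefix_rcons_disjoint s v : sprefix (s ++ [false]) v -> ~ sprefix (s ++ [true]) v.
Proof.
  intros [a ->] [c Hc]. rewrite <- !app_assoc in Hc.
  apply app_inv_head in Hc. discriminate.
Qed.

Lemma restr_length X n : length (restr X n) = n.
Proof. unfold restr. now rewrite length_map, length_seq. Qed.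

Lemma restr_nth X n i : (i < n)%nat -> nth i (restr X n) false = X i.
Proof.
  intros Hi. unfold restr.
  rewrite nth_indep with (d' := X 0%nat) by (now rewrite length_map, length_seq).
  now rewrite map_nth, seq_nth.
Qed.

Lemma prefix_of_restr X n : prefix_of (restr X n) X.
Proof. intros i Hi. rewrite restr_length in Hi. now apply restr_nth. Qed.

Lemma restr_prefix_of s X : prefix_of s X -> restr X (length s) = s.
Proof.
  intros H. apply nth_ext with (d := false) (d' := false); rewrite restr_length; [reflexivity|].
  intros i Hi. rewrite restr_nth by lia. symmetry. now apply H.
Qed.

Lemma strings_length n u : In u (strings n) -> length u = n.
Proof.
  revert u; induction n as [|n IH]; simpl; intros u H.
  - now destruct H as [<- | []].
  - apply in_flat_map in H as [v [Hv Hu]]. apply IH in Hv.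
    destruct Hu as [<- | [<- | []]]; rewrite length_app; simpl; lia.
Qed.

Lemma in_strings n u : length u = n -> In u (strings n).
Proof.
  revert u; induction n as [|n IH]; simpl; intros u H.
  - destruct u; [auto | discriminate].
  - destruct (@exists_last _ u) as [v [c ->]]; [intros ->; discriminate|].
    rewrite length_app in H. simpl in H. apply in_flat_map. exists v.
    split; [apply IH; lia | destruct c; simpl; auto].
Qed.

Definition weight (u : bstring) : R := (/2) ^ length u.

Lemma weight_pos u : 0 < weight u.
Proof. apply half_pow_pos. Qed.

Lemma weight_rcons s c : weight (s ++ [c]) = weight s / 2.
Proof. unfold weight. rewrite length_app, Nat.add_1_r. simpl. lra. Qed.

Lemma weight_antitone u v : (length u <= length v)%nat -> weight v <= weight u.
Proof.
  intros H. unfold weight. replace (length v) with (length u + (length v - length u))%nat by lia.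
  rewrite pow_add. pose proof (half_pow_pos (length u)).
  assert ((/2) ^ (length v - length u) <= 1) by (rewrite <- (pow1 (length v - length u));
    apply pow_incr; lra).
  nra.
Qed.

Lemma psum_S f n : psum f (S n) = psum f n + weight (f n).
Proof. reflexivity. Qed.

Lemma psum_le f n m : (n <= m)%nat -> psum f n <= psum f m.
Proof. induction 1; [lra | rewrite psum_S; pose proof (weight_pos (f m)); lra]. Qed.

Definition psums (f : nat -> bstring) : R -> Prop := fun r => exists n, r = psum f n.

Lemma psums_lub f B :
  (forall n, psum f n <= B) -> is_lub (psums f) (Rsup (psums f)).
Proof.
  intros HB. apply Rsup_lub; [exists B; intros r [n ->]; auto | now exists (psum f 0), 0%nat].
Qed.

(** Partial covers: [None] entries are omitted; [pad] turns them into a genuine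
    cover at an extra cost of at most [2^-K]. *)
Definition oweight (o : option bstring) : R :=
  match o with Some u => weight u | None => 0 end.

Fixpoint opsum (g : nat -> option bstring) (n : nat) : R :=
  match n with O => 0 | S m => opsum g m + oweight (g m) end.

Definition pcovers (g : nat -> option bstring) (A : cantor -> Prop) : Prop :=
  forall X, A X -> exists i u, g i = Some u /\ prefix_of u X.

Definition pad (g : nat -> option bstring) (K i : nat) : bstring :=
  match g i with Some u => u | None => repeat false (S (i + K)) end.

Lemma opsum_le g n m : (n <= m)%nat -> opsum g n <= opsum g m.
Proof.
  induction 1; simpl; [lra|].
  assert (0 <= oweight (g m)) by (destruct (g m); simpl; [left; apply weight_pos | lra]). lra.
Qed.

Lemma psum_pad g K n : psum (pad g K) n <= opsum g n + (/2) ^ K.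
Proof.
  enough (H : psum (pad g K) n <= opsum g n + (/2) ^ K * (1 - (/2) ^ n))
    by (pose proof (half_pow_pos K); pose proof (half_pow_pos n); nra).
  induction n as [|n IH]; simpl; [lra|].
  pose proof (half_pow_pos K). pose proof (half_pow_pos n).
  unfold pad at 2. destruct (g n) as [u|]; simpl; unfold weight; [nra|].
  rewrite repeat_length, pow_add. nra.
Qed.

Lemma pad_covers g K A : pcovers g A -> covers (pad g K) A.
Proof.
  intros Hg X HX. destruct (Hg X HX) as [i [u [Hi Hu]]].
  exists i. unfold pad. now rewrite Hi.
Qed.

Definition single_pcover (u : bstring) (i : nat) : option bstring :=
  match i with O => Some u | S _ => None end.

Lemma pcovers_single u : pcovers (single_pcover u) (cyl u).
Proof. intros X HX. now exists 0%nat, u. Qed.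

Lemma opsum_single u n : opsum (single_pcover u) n <= weight u.
Proof.
  induction n as [|[|n] IH]; simpl in *; [pose proof (weight_pos u) | |]; lra.
Qed.

Definition neg_cover_sums (A : cantor -> Prop) : R -> Prop :=
  fun r => exists f, covers f A /\ bound (psums f) /\ r = - Rsup (psums f).

Lemma neg_cover_sums_lub A : is_lub (neg_cover_sums A) (- mu A).
Proof.
  change (is_lub (neg_cover_sums A) (- - Rsup (neg_cover_sums A))).
  rewrite Ropp_involutive. apply Rsup_lub.
  - exists 0. intros r [f [_ [[B HB] ->]]].
    pose proof (proj1 (psums_lub f B (fun n => HB _ (ex_intro _ n eq_refl))) 0
      (ex_intro _ 0%nat eq_refl)).
    lra.
  - set (f := pad (single_pcover []) 0).
    assert (Hf : forall n, psum f n <= 2).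
    { intros n. unfold f. pose proof (psum_pad (single_pcover []) 0 n).
      pose proof (opsum_single [] n). unfold weight in *. simpl in *. lra. }
    exists (- Rsup (psums f)), f. split; [|split; [exists 2; intros r [n ->]; auto | reflexivity]].
    apply pad_covers. intros X _. apply pcovers_single. intros i Hi. simpl in Hi. lia.
Qed.

Lemma mu_le_cover f A B : covers f A -> (forall n, psum f n <= B) -> mu A <= B.
Proof.
  intros Hf HB.
  assert (Htot : Rsup (psums f) <= B) by (apply (psums_lub f B HB); intros r [n ->]; auto).
  assert (- Rsup (psums f) <= - mu A).
  { apply (neg_cover_sums_lub A). exists f. repeat split; auto. exists B. intros r [n ->]; auto. }
  lra.
Qed.

Lemma mu_cover_approx A eps :
  0 < eps -> exists f, covers f A /\ forall n, psum f n <= mu A + eps.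
Proof.
  intros Heps. apply NNPP. intros Hno.
  enough (- mu A <= - mu A - eps) by lra.
  apply (neg_cover_sums_lub A). intros r [f [Hf [[B HB] ->]]].
  apply Rnot_lt_le. intros Hlt. apply Hno. exists f. split; [exact Hf|]. intros n.
  pose proof (proj1 (psums_lub f B (fun n => HB _ (ex_intro _ n eq_refl))) _ (ex_intro _ n eq_refl)).
  lra.
Qed.

Lemma mu_le_pcover g A B : pcovers g A -> (forall n, opsum g n <= B) -> mu A <= B.
Proof.
  intros Hg HB. apply Rle_plus_epsilon. intros eps Heps.
  destruct (half_pow_small eps Heps) as [K HK].
  apply (mu_le_cover (pad g K)); [now apply pad_covers|].
  intros n. pose proof (psum_pad g K n). specialize (HB n). lra.
Qed.

Lemma mu_nonneg A : 0 <= mu A.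
Proof.
  apply Rnot_lt_le. intros H.
  destruct (mu_cover_approx A (- mu A / 2) ltac:(lra)) as [f [_ Hf]].
  specialize (Hf 0%nat). simpl in Hf. lra.
Qed.

Lemma mu_mono (A B : cantor -> Prop) : (forall X, A X -> B X) -> mu A <= mu B.
Proof.
  intros H. apply Rle_plus_epsilon. intros eps Heps.
  destruct (mu_cover_approx B eps Heps) as [f [Hf Hsum]].
  apply (mu_le_cover f); auto. intros X HX. now apply Hf, H.
Qed.

Lemma mu_empty (A : cantor -> Prop) : (forall X, ~ A X) -> mu A = 0.
Proof.
  intros H. apply Rle_antisym; [|apply mu_nonneg].
  apply (mu_le_pcover (fun _ => None)); [intros X HX; contradiction (H X HX)|].
  induction n; simpl; lra.
Qed.

Lemma mu_cyl_le s : mu (cyl s) <= weight s.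
Proof. apply (mu_le_pcover (single_pcover s)); [apply pcovers_single | apply opsum_single]. Qed.

Definition interleave (f g : nat -> bstring) (i : nat) : bstring :=
  if Nat.even i then f (Nat.div2 i) else g (Nat.div2 i).

Lemma psum_interleave f g n : psum (interleave f g) (2 * n) = psum f n + psum g n.
Proof.
  induction n as [|n IH]; [simpl; lra|].
  replace (2 * S n)%nat with (S (S (2 * n))) by lia.
  rewrite !psum_S, IH. unfold interleave.
  rewrite Nat.even_succ, Nat.odd_even, Nat.even_even, Nat.div2_succ_double, Nat.div2_double.
  simpl. lra.
Qed.

Lemma mu_union (A B : cantor -> Prop) : mu (fun X => A X \/ B X) <= mu A + mu B.
Proof.
  apply Rle_plus_epsilon. intros eps Heps.
  destruct (mu_cover_approx A (eps / 2) ltac:(lra)) as [f [Hf Hfsum]].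
  destruct (mu_cover_approx B (eps / 2) ltac:(lra)) as [g [Hg Hgsum]].
  apply (mu_le_cover (interleave f g)).
  - intros X [HX | HX].
    + destruct (Hf X HX) as [i Hi]. exists (2 * i)%nat. unfold interleave.
      now rewrite Nat.even_even, Nat.div2_double.
    + destruct (Hg X HX) as [i Hi]. exists (S (2 * i)). unfold interleave.
      now rewrite Nat.even_succ, Nat.odd_even, Nat.div2_succ_double.
  - intros n. apply Rle_trans with (psum (interleave f g) (2 * n)); [apply psum_le; lia|].
    rewrite psum_interleave. specialize (Hfsum n). specialize (Hgsum n). lra.
Qed.

Lemma mu_union_list {T} (l : list T) (A : T -> cantor -> Prop) :
  mu (fun X => exists t, In t l /\ A t X) <= sumR l (fun t => mu (A t)).
Proof.
  induction l as [|a l IH]; simpl.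
  - rewrite mu_empty; [lra | intros X [t [[] _]]].
  - apply Rle_trans with (mu (fun X => A a X \/ exists t, In t l /\ A t X)).
    + apply mu_mono. intros X [t [[<- | Ht] HX]]; [left | right]; eauto.
    + pose proof (mu_union (A a) (fun X => exists t, In t l /\ A t X)). lra.
Qed.

Lemma psum_seq f N : sumR (map f (seq 0 N)) weight = psum f N.
Proof.
  induction N as [|N IH]; [reflexivity|].
  rewrite seq_S, map_app, sumR_app, IH, psum_S. simpl. lra.
Qed.

Definition sprefixb (s u : bstring) : bool :=
  if excluded_middle_informative (sprefix s u) then true else false.

Lemma sprefixb_true s u : sprefixb s u = true <-> sprefix s u.
Proof. unfold sprefixb. destruct (excluded_middle_informative _); split; easy. Qed.

Definition finitely_covers (L : list bstring) (s : bstring) : Prop :=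
  forall X, prefix_of s X -> exists u, In u L /\ prefix_of u X.

(** Either some [u] in [L] lies above [s], or [L] splits into covers of the two
    children of [s], whose strings all lie strictly below [s]. *)
Lemma weight_le_finite_cover_depth d s L :
  (forall u, In u L -> (length u <= length s + d)%nat) ->
  finitely_covers L s -> weight s <= sumR L weight.
Proof.
  assert (Hpos : forall u, In u L -> 0 <= weight u) by (intros; left; apply weight_pos).
  revert s L Hpos. induction d as [|d IH]; intros s L Hpos Hdepth Hcov.
  all: destruct (classic (exists u, In u L /\ sprefix u s)) as [[u [Hu Hus]] | Hbelow].
  1,3: apply Rle_trans with (weight u);
       [apply weight_antitone, sprefix_length, Hus | now apply sumR_ge_term].
  - exfalso. destruct (Hcov (fun i => nth i s false) (fun i _ => eq_refl)) as [u [Hu HuX]].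
    apply Hbelow. exists u. split; [exact Hu|].
    apply (prefix_of_sprefix u s (fun i => nth i s false) HuX (fun i _ => eq_refl)).
    specialize (Hdepth u Hu). lia.
  - assert (Hchild : forall c, weight (s ++ [c]) <= sumR (filter (sprefixb (s ++ [c])) L) weight).
    { intros c. apply IH.
      - intros u Hu. apply filter_In in Hu. now apply Hpos.
      - intros u Hu. apply filter_In in Hu as [Hu _]. specialize (Hdepth u Hu).
        rewrite length_app. simpl. lia.
      - intros X HX. pose proof HX as [Hs _]%prefix_of_rcons.
        destruct (Hcov X Hs) as [u [Hu HuX]]. exists u. split; [|exact HuX].
        apply filter_In. split; [exact Hu|]. apply sprefixb_true.
        destruct (Nat.le_gt_cases (length u) (length s)).
        + exfalso. apply Hbelow. exists u. split; [exact Hu|].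
          now apply (prefix_of_sprefix u s X).
        + apply (prefix_of_sprefix _ u X); auto. rewrite length_app. simpl. lia. }
    pose proof (Hchild false). pose proof (Hchild true). rewrite !weight_rcons in *.
    pose proof (sumR_filter_disjoint (sprefixb (s ++ [false])) (sprefixb (s ++ [true])) L
      weight Hpos) as Hdisj.
    enough (sumR (filter (sprefixb (s ++ [false])) L) weight +
            sumR (filter (sprefixb (s ++ [true])) L) weight <= sumR L weight) by lra.
    apply Hdisj. intros u Hf%sprefixb_true.
    destruct (sprefixb (s ++ [true]) u) eqn:Ht; [|reflexivity].
    apply sprefixb_true in Ht. contradiction (sprefix_rcons_disjoint s u Hf Ht).
Qed.

Lemma weight_le_finite_cover s L : finitely_covers L s -> weight s <= sumR L weight.
Proof.
  apply weight_le_finite_cover_depth with (d := list_max (map (@length bool) L)).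
  intros u Hu. enough (length u <= list_max (map (@length bool) L))%nat by lia.
  pose proof (proj1 (list_max_le (map (@length bool) L) _) (le_n _)) as Hall.
  rewrite Forall_forall in Hall. now apply Hall, in_map.
Qed.

Section Compactness.

Variable f : nat -> bstring.

Definition avoidable (u : bstring) : Prop :=
  forall N, exists Y, prefix_of u Y /\ forall i, (i < N)%nat -> ~ prefix_of (f i) Y.

Lemma avoidable_rcons u : avoidable u -> avoidable (u ++ [false]) \/ avoidable (u ++ [true]).
Proof.
  intros Hu. apply NNPP. intros [H0 H1]%not_or_and.
  apply not_all_ex_not in H0 as [N0 H0]. apply not_all_ex_not in H1 as [N1 H1].
  destruct (Hu (Nat.max N0 N1)) as [Y [HuY HY]].
  destruct (prefix_of_rcons_cases u Y HuY) as [HcY | HcY];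
    [apply H0 | apply H1]; exists Y; split; auto; intros i Hi; apply HY; lia.
Qed.

Definition avoid_next (u : bstring) : bstring :=
  if excluded_middle_informative (avoidable (u ++ [false])) then u ++ [false] else u ++ [true].

Lemma avoid_next_avoidable u : avoidable u -> avoidable (avoid_next u).
Proof.
  intros Hu. unfold avoid_next. destruct (excluded_middle_informative _); auto.
  destruct (avoidable_rcons u Hu); tauto.
Qed.

Lemma avoid_next_rcons u : exists c, avoid_next u = u ++ [c].
Proof. unfold avoid_next. destruct (excluded_middle_informative _); eexists; reflexivity. Qed.

Definition avoid_path (s : bstring) (k : nat) : bstring := Nat.iter k avoid_next s.

Lemma avoid_path_length s k : length (avoid_path s k) = (length s + k)%nat.
Proof.
  induction k as [|k IH]; simpl; [lia|].
  destruct (avoid_next_rcons (avoid_path s k)) as [c ->].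
  rewrite length_app, IH. simpl. lia.
Qed.

Lemma avoid_path_mono s k j : sprefix (avoid_path s k) (avoid_path s (k + j)).
Proof.
  induction j as [|j IH].
  - exists []. now rewrite Nat.add_0_r, app_nil_r.
  - rewrite Nat.add_succ_r. apply (sprefix_trans _ _ _ IH). simpl.
    destruct (avoid_next_rcons (avoid_path s (k + j))) as [c ->]. now exists [c].
Qed.

Lemma avoid_path_nth s k k' i :
  (i < length (avoid_path s k))%nat -> (i < length (avoid_path s k'))%nat ->
  nth i (avoid_path s k) false = nth i (avoid_path s k') false.
Proof.
  intros Hk Hk'. destruct (Nat.le_ge_cases k k').
  - replace k' with (k + (k' - k))%nat by lia. apply sprefix_nth; [apply avoid_path_mono | exact Hk].
  - replace k with (k' + (k - k'))%nat by lia.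
    symmetry. apply sprefix_nth; [apply avoid_path_mono | exact Hk'].
Qed.

(** Compactness of Cantor space: if [s] were avoidable, the limit of [avoid_path s]
    would lie in [s] but outside every [f i]. *)
Lemma cyl_cover_finite s : covers f (cyl s) -> exists N, finitely_covers (map f (seq 0 N)) s.
Proof.
  intros Hf. apply NNPP. intros Hno.
  assert (Hs : avoidable s).
  { intros N. apply NNPP. intros HN. apply Hno. exists N. intros X HX.
    apply NNPP. intros HXno. apply HN. exists X. split; [exact HX|].
    intros i Hi HiX. apply HXno. exists (f i). split; [|exact HiX].
    apply in_map, in_seq. lia. }
  set (X := fun i => nth i (avoid_path s (S i)) false).
  assert (HX : forall k, prefix_of (avoid_path s k) X).
  { intros k i Hi. unfold X. apply avoid_path_nth; auto. rewrite avoid_path_length. lia. }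
  destruct (Hf X (HX 0%nat)) as [i Hi].
  assert (Hk : forall k, avoidable (avoid_path s k))
    by (induction k; [exact Hs | now apply avoid_next_avoidable]).
  destruct (Hk (length (f i)) (S i)) as [Y [HkY HY]].
  apply (HY i (Nat.lt_succ_diag_r i)). intros j Hj.
  rewrite (Hi j Hj), <- (HX (length (f i)) j) by (rewrite avoid_path_length; lia).
  apply HkY. rewrite avoid_path_length. lia.
Qed.

End Compactness.

Lemma mu_cyl s : mu (cyl s) = weight s.
Proof.
  apply Rle_antisym; [apply mu_cyl_le|].
  apply Rle_plus_epsilon. intros eps Heps.
  destruct (mu_cover_approx (cyl s) eps Heps) as [f [Hf Hsum]].
  destruct (cyl_cover_finite f s Hf) as [N HN].
  apply weight_le_finite_cover in HN. rewrite psum_seq in HN.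
  specialize (Hsum N). lra.
Qed.

(** The part of a cover of [[s]] ∩ A inside [[s c]]: a string above [s] is replaced by
    [s c], a string below [s c] is kept, the rest is dropped. *)
Definition split_cover (f : nat -> bstring) (s : bstring) (c : bool) (i : nat) : option bstring :=
  if excluded_middle_informative (sprefix (f i) s) then Some (s ++ [c])
  else if excluded_middle_informative (sprefix (s ++ [c]) (f i)) then Some (f i)
  else None.

Lemma split_cover_weight f s i :
  oweight (split_cover f s false i) + oweight (split_cover f s true i) <= weight (f i).
Proof.
  unfold split_cover. destruct (excluded_middle_informative _) as [Habove | _].
  - simpl. rewrite !weight_rcons.
    pose proof (weight_antitone _ _ (sprefix_length _ _ Habove)). lra.
  - pose proof (weight_pos (f i)).
    destruct (excluded_middle_informative (sprefix (s ++ [false]) (f i))) as [H0 | _];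
    destruct (excluded_middle_informative (sprefix (s ++ [true]) (f i))) as [H1 | _];
    simpl; try lra.
    contradiction (sprefix_rcons_disjoint s (f i) H0 H1).
Qed.

Lemma opsum_split_cover f s n :
  opsum (split_cover f s false) n + opsum (split_cover f s true) n <= psum f n.
Proof.
  induction n as [|n IH]; simpl; [lra|].
  pose proof (split_cover_weight f s n). unfold weight in *. lra.
Qed.

Lemma pcovers_split_cover f s c A :
  covers f (inter (cyl s) A) -> pcovers (split_cover f s c) (inter (cyl (s ++ [c])) A).
Proof.
  intros Hf X [HX HA]. pose proof HX as [Hs _]%prefix_of_rcons.
  destruct (Hf X (conj Hs HA)) as [i Hi]. exists i. unfold split_cover.
  destruct (excluded_middle_informative _) as [_ | Hnot_above]; [now eexists|].
  destruct (excluded_middle_informative _) as [_ | Hnot_below]; [now eexists|].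
  exfalso. destruct (Nat.le_gt_cases (length (f i)) (length s)).
  - apply Hnot_above. now apply (prefix_of_sprefix _ _ X).
  - apply Hnot_below. apply (prefix_of_sprefix _ _ X); auto. rewrite length_app. simpl. lia.
Qed.

Lemma mu_split s A :
  mu (inter (cyl s) A) = mu (inter (cyl (s ++ [false])) A) + mu (inter (cyl (s ++ [true])) A).
Proof.
  apply Rle_antisym.
  - eapply Rle_trans; [|apply mu_union]. apply mu_mono.
    intros X [HX HA]. destruct (prefix_of_rcons_cases s X HX); [left | right]; now split.
  - apply Rle_plus_epsilon. intros eps Heps.
    destruct (mu_cover_approx (inter (cyl s) A) eps Heps) as [f [Hf Hsum]].
    set (T := mu (inter (cyl s) A)) in *.
    assert (Hpair : forall n m,
      opsum (split_cover f s false) n + opsum (split_cover f s true) m <= T + eps).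
    { intros n m. pose proof (opsum_le (split_cover f s false) n (Nat.max n m) ltac:(lia)).
      pose proof (opsum_le (split_cover f s true) m (Nat.max n m) ltac:(lia)).
      pose proof (opsum_split_cover f s (Nat.max n m)). specialize (Hsum (Nat.max n m)). lra. }
    assert (H0 : forall m,
      mu (inter (cyl (s ++ [false])) A) <= T + eps - opsum (split_cover f s true) m).
    { intros m. apply (mu_le_pcover (split_cover f s false)); [now apply pcovers_split_cover|].
      intros n. specialize (Hpair n m). lra. }
    enough (mu (inter (cyl (s ++ [true])) A) <= T + eps - mu (inter (cyl (s ++ [false])) A))
      by lra.
    apply (mu_le_pcover (split_cover f s true)); [now apply pcovers_split_cover|].
    intros m. specialize (H0 m). lra.
Qed.

Lemma approx_rcons Phi b s n :
  approx Phi b (s ++ [false]) n + approx Phi b (s ++ [true]) n = 2 * approx Phi b s n.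
Proof.
  unfold approx. rewrite <- sumR_add, <- sumR_scal. f_equal.
  apply functional_extensionality. intros t.
  rewrite !mu_cyl, !weight_rcons, (mu_split s (preimage Phi (cyl t))).
  pose proof (weight_pos s). field. lra.
Qed.

Lemma approx_limit_martingale Phi b b' :
  (forall s, Un_cv (approx Phi b s) (b' s)) ->
  forall s, b' (s ++ [false]) + b' (s ++ [true]) = 2 * b' s.
Proof.
  intros Hlim s. replace (2 * b' s) with (b' s + b' s) by ring.
  apply (UL_sequence (fun n => approx Phi b (s ++ [false]) n + approx Phi b (s ++ [true]) n)).
  - now apply CV_plus.
  - replace (fun n => _) with (fun n => approx Phi b s n + approx Phi b s n).
    + now apply CV_plus.
    + apply functional_extensionality. intros n. rewrite approx_rcons. ring.
Qed.

Lemma mu_cyl_le_sum_preimages Phi s n :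
  mu (cyl s) <= sumR (strings n) (fun t => mu (inter (cyl s) (preimage Phi (cyl t)))).
Proof.
  eapply Rle_trans; [|apply mu_union_list]. apply mu_mono. intros Y HY.
  exists (restr (Phi Y) n). split; [apply in_strings, restr_length|].
  split; [exact HY | apply prefix_of_restr].
Qed.

(** Unreachable strings carry measure 0, and the measures of the reachable ones add up
    to at least mu([s]). *)
Lemma approx_ge Phi b s n k :
  0 <= k ->
  (forall t, In t (strings n) -> (exists Y, cyl s Y /\ cyl t (Phi Y)) -> k <= b t) ->
  k <= approx Phi b s n.
Proof.
  intros Hk Hb. unfold approx. rewrite mu_cyl. pose proof (weight_pos s) as Hs.
  set (m t := mu (inter (cyl s) (preimage Phi (cyl t)))).
  apply Rle_trans with (sumR (strings n) (fun t => k * (m t / weight s))).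
  - rewrite sumR_scal.
    enough (1 <= sumR (strings n) (fun t => m t / weight s)) by nra.
    replace (sumR (strings n) (fun t => m t / weight s))
      with (/ weight s * sumR (strings n) m)
      by (rewrite <- sumR_scal; f_equal; apply functional_extensionality; intros t;
          unfold Rdiv; ring).
    pose proof (mu_cyl_le_sum_preimages Phi s n) as Hcov. rewrite mu_cyl in Hcov.
    apply Rmult_le_reg_l with (weight s); [exact Hs|].
    rewrite <- Rmult_assoc, Rinv_r by lra. unfold m. lra.
  - apply sumR_le. intros t Ht.
    destruct (classic (exists Y, cyl s Y /\ cyl t (Phi Y))) as [Hreach | Hunreach].
    + apply Rmult_le_compat_r; [|now apply Hb].
      unfold Rdiv. apply Rmult_le_pos; [apply mu_nonneg | left; now apply Rinv_0_lt_compat].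
    + unfold m. rewrite mu_empty; [unfold Rdiv; lra|].
      intros Y HY. apply Hunreach. now exists Y.
Qed.

Lemma represents_agree phi Phi X Y m' i :
  represents phi Phi -> prefix_of (restr X m') Y ->
  (i < length (phi (restr X m')))%nat -> Phi Y i = Phi X i.
Proof.
  intros [Happrox _] HY Hi.
  pose proof (Happrox Y m') as HPY. pose proof (Happrox X m') as HPX.
  apply restr_prefix_of in HY. rewrite restr_length in HY. rewrite HY in HPY.
  now rewrite <- HPY, <- HPX.
Qed.

Lemma saving_Succ_approx_limit Phi phi b b' :
  represents phi Phi -> (forall s, Un_cv (approx Phi b s) (b' s)) -> saving b ->
  forall X, Succ b (Phi X) -> Succ b' X.
Proof.
  intros Hphi Hlim Hsav X HX M.
  destruct (INR_archimed 1 M ltac:(lra)) as [k Hk]. rewrite Rmult_1_r in Hk.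
  destruct (Hsav k (Phi X) HX) as [m Hm].
  destruct (proj2 Hphi X m) as [m' Hm'].
  exists m'. apply Rlt_le_trans with (INR k); [lra|].
  apply (Un_cv_ge_eventually _ _ _ m (Hlim (restr X m'))). intros n Hn.
  apply approx_ge; [apply pos_INR|]. intros t Ht [Y [HY Ht_Y]].
  apply Hm, (prefix_of_sprefix _ t (Phi Y)); auto.
  - intros i Hi. rewrite restr_length in Hi. rewrite restr_nth by exact Hi.
    symmetry. apply (represents_agree phi Phi X Y m'); auto. lia.
  - rewrite restr_length, (strings_length n t Ht). exact Hn.
Qed.

Theorem lemmaL2
  (Phi : cantor -> cantor) (phi : bstring -> bstring)
  (Hphi : represents phi Phi)
  (b : bstring -> R) (Hb : Phi_martingale Phi b)
  (b' : bstring -> R)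
  (Hlim : forall s : bstring, Un_cv (approx Phi b s) (b' s)) :
  (forall s : bstring, b' (s ++ [false]) + b' (s ++ [true]) = 2 * b' s) /\
  (saving b -> forall X : cantor, Succ b (Phi X) -> Succ b' X).
Proof.
  split.
  - exact (approx_limit_martingale Phi b b' Hlim).
  - exact (saving_Succ_approx_limit Phi phi b b' Hphi Hlim).
Qed.
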